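(* For all integers $n\ge1$ and $r\ge1$: (a) $\displaystyle\sum_{k=1}^{n}(2^k-1)\,\omega(n-k)=\sum_{\substack{m+k=n\\ m\ge1,\ k\ge0}}\Phi(m)\,\Omega_m(k)$; (b) $\displaystyle\sum_{k=1}^{n}\binom{k}{r}\omega(n-k)=\sum_{\substack{m+k=n\\ m\ge1,\ k\ge0}}\Phi_r(m)\,\Omega_m(k)$.
   Context: $\Phi(n)$ is the number of nonempty subsets $A\subseteq\{1,2,\dots,n\}$ with $\gcd(\gcd(A),n)=1$, and $\Phi_r(n)$ is the number of such subsets of cardinality $r$. $\omega:\mathbb{Z}\to\mathbb{Z}$ is defined by $\omega(0)=1$; $\omega(m)=(-1)^j$ if $m=\frac{3j^2\pm j}{2}$ for some integer $j\ge1$; $\omega(m)=0$ otherwise (in particular for $m<0$). For $m\ge1$ and integer $k$, $\Omega_m(k)=\sum_{j\ge0}\omega(k-jm)=\omega(k)+\omega(k-m)+\omega(k-2m)+\cdots$. *)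

From mathcomp Require Import all_boot all_order all_algebra.
Set Implicit Arguments. Unset Strict Implicit. Unset Printing Implicit Defensive.
Import GRing.Theory Num.Theory.
Local Open Scope ring_scope.

(* A subset A of {1,...,n} is encoded as A : {set 'I_n}, where i : 'I_n stands
   for the integer i+1. *)
Definition gcd_with (n : nat) (A : {set 'I_n}) : nat :=
  \big[gcdn/n]_(i in A) (i.+1)%N.

Definition Phi (n : nat) : nat :=
  #|[set A : {set 'I_n} | (A != set0) && (gcd_with A == 1)%N]|.

Definition Phi_r (r n : nat) : nat :=
  #|[set A : {set 'I_n} | (A != set0) && (gcd_with A == 1)%N && (#|A| == r)]|.

Definition is_pent (m : int) (j : nat) : bool :=
  (0 < j)%N && ((2 * m == (3 * j ^ 2 + j)%:Z) || (2 * m == (3 * j ^ 2 - j)%:Z)).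

Definition omega (m : int) : int :=
  if m == 0 then 1
  else if m < 0 then 0
  else match [pick j : 'I_(`|m|%N.+1) | is_pent m j] with
       | Some j => (-1) ^+ (nat_of_ord j)
       | None => 0
       end.

(* Omega_m(k) = sum_{j>=0} omega(k - j m); for m >= 1 only j <= |k| can
   contribute (if k < 0 all terms vanish). *)
Definition Omega (m : nat) (k : int) : int :=
  \sum_(j < `|k|%N.+1) omega (k - (j * m)%:Z).

(* Dividing a nonempty A ⊆ {1,...,k} by g = gcd(gcd A, k) gives a subset of
   {1,...,k/g} whose gcd with k/g is 1, and this is a bijection onto such
   subsets of the same size; hence Σ_{d|k} Φ(d) = 2^k - 1 and
   Σ_{d|k} Φ_r(d) = C(k, r).  Substituting these divisor sums on the left and
   collecting the terms k = jm gives Σ_{j≥1} ω(n - jm) = Ω_m(n - m), so only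
   the vanishing of ω at negative arguments is used. *)
From mathcomp Require Import all_boot all_order all_algebra zify.
Set Implicit Arguments. Unset Strict Implicit. Unset Printing Implicit Defensive.
Import GRing.Theory Num.Theory.

Definition gcd_set n (A : {set 'I_n}) : nat := \big[gcdn/0]_(i in A) i.+1.

Lemma gcd_withE n (A : {set 'I_n}) : gcd_with A = gcdn (gcd_set A) n.
Proof.
rewrite /gcd_with /gcd_set.
by elim/big_rec2: _ => [|i y1 y2 _ ->]; rewrite ?gcd0n // gcdnA.
Qed.

Lemma gcd_with_gt0 n (A : {set 'I_n}) : 0 < n -> 0 < gcd_with A.
Proof. by move=> n_gt0; rewrite gcd_withE gcdn_gt0 n_gt0 orbT. Qed.

Lemma gcd_with_dvdn n (A : {set 'I_n}) : gcd_with A %| n.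
Proof. by rewrite gcd_withE dvdn_gcdr. Qed.

Lemma gcd_with_dvd_mem n (A : {set 'I_n}) (j : 'I_n) :
  j \in A -> gcd_with A %| j.+1.
Proof.
move=> jA; rewrite gcd_withE (dvdn_trans (dvdn_gcdl _ _)) //.
by rewrite /gcd_set (bigD1 j) //= dvdn_gcdl.
Qed.

Definition primitive_sets (P : pred nat) d :=
  [set B : {set 'I_d} | (B != set0) && (gcd_with B == 1) && P #|B|].

Section Dilation.

Variables (n d : nat).
Hypothesis d_dvd : d %| n.+1.
Local Notation q := (n.+1 %/ d).

Let d_gt0 : 0 < d.
Proof. by case: d d_dvd => //; rewrite dvd0n. Qed.

Let q_gt0 : 0 < q.
Proof. by rewrite divn_gt0 // dvdn_leq. Qed.

Let nE : n.+1 = d * q.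
Proof. by rewrite mulnC divnK. Qed.

Definition dilate (i : 'I_d) : 'I_n.+1 := inord (i.+1 * q).-1.

Lemma dilateS (i : 'I_d) : (dilate i).+1 = i.+1 * q.
Proof.
have iq_gt0 : 0 < i.+1 * q by rewrite muln_gt0.
rewrite inordK prednK //.
by rewrite [X in _ <= X]nE leq_mul2r ltn_ord orbT.
Qed.

Lemma dilate_inj : injective dilate.
Proof.
move=> i j /(congr1 (fun x : 'I_n.+1 => x.+1)); rewrite !dilateS.
by move/eqP; rewrite eqn_pmul2r // eqSS => /eqP /val_inj.
Qed.

Lemma gcd_with_dilate (B : {set 'I_d}) :
  gcd_with (dilate @: B) = gcd_with B * q.
Proof.
have gcd_set_dilate : gcd_set (dilate @: B) = gcd_set B * q.
  rewrite /gcd_set big_imset; last by move=> x y _ _ /dilate_inj.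
  rewrite (big_morph (muln^~ q) (fun a b => muln_gcdl a b q) (mul0n q)).
  by apply: eq_bigr => i _; rewrite dilateS.
by rewrite !gcd_withE gcd_set_dilate [X in gcdn _ X]nE muln_gcdl.
Qed.

Lemma dilate_preimK (A : {set 'I_n.+1}) :
  q %| gcd_with A -> dilate @: [set i | dilate i \in A] = A.
Proof.
move=> q_dvd; apply/setP => j; apply/imsetP/idP => [[i] | jA].
  by rewrite inE => iA ->.
have q_dvd_j : q %| j.+1 by rewrite (dvdn_trans q_dvd) ?gcd_with_dvd_mem.
have jq_gt0 : 0 < j.+1 %/ q by rewrite divn_gt0 // dvdn_leq.
have jq_lt : (j.+1 %/ q).-1 < d.
  by rewrite prednK // -(leq_pmul2r q_gt0) divnK // -nE.
have dilate_jq : dilate (Ordinal jq_lt) = j.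
  by apply/val_inj/succn_inj; rewrite dilateS /= prednK // divnK.
by exists (Ordinal jq_lt); rewrite ?inE dilate_jq.
Qed.

Lemma cofactor_setsE (P : pred nat) :
  [set A : {set 'I_n.+1} | (A != set0) && P #|A| && (n.+1 %/ gcd_with A == d)]
    = [set dilate @: B | B : {set 'I_d} in primitive_sets P d].
Proof.
apply/setP => A; rewrite inE; apply/idP/imsetP => [|[B]].
  case/andP=> /andP[A_neq0 PA] /eqP Ad.
  have gcdA : gcd_with A = q.
    apply/eqP; rewrite -(eqn_pmul2l d_gt0) -nE -{1}Ad.
    by rewrite divnK ?gcd_with_dvdn.
  set B := [set i | dilate i \in A].
  have AE : A = dilate @: B by rewrite dilate_preimK ?gcdA.
  exists B => //; rewrite inE -(card_imset _ dilate_inj) -AE PA andbT.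
  rewrite -(imset_eq0 dilate) -AE A_neq0 /=.
  by rewrite -(eqn_pmul2r q_gt0) mul1n -gcd_with_dilate -AE gcdA.
rewrite inE => /andP[/andP[B_neq0 /eqP gcdB] PB] ->.
rewrite imset_eq0 B_neq0 card_imset ?PB /=; last exact: dilate_inj.
by rewrite gcd_with_dilate gcdB mul1n [X in X %/ _]nE mulnK.
Qed.

End Dilation.

Lemma card_nonempty_sets (P : pred nat) n :
  #|[set A : {set 'I_n.+1} | (A != set0) && P #|A|]| =
  \sum_(1 <= d < n.+2 | d %| n.+1) #|primitive_sets P d|.
Proof.
set X := [set A : {set 'I_n.+1} | (A != set0) && P #|A|].
set cof := fun A : {set 'I_n.+1} => n.+1 %/ gcd_with A.
have fibre d : d %| n.+1 -> #|primitive_sets P d| = \sum_(A in X | cof A == d) 1.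
  move=> d_dvd; rewrite sum1_card -(card_imset _ (imset_inj (dilate_inj d_dvd))).
  rewrite -cofactor_setsE //; apply: eq_card => A.
  by rewrite !inE unfold_in !inE.
rewrite (eq_bigr _ fibre) (exchange_big_dep (mem X)) /=; last by move=> ? ? _ /andP[].
rewrite -sum1_card; apply: eq_bigr => A AX.
under eq_bigl => d do rewrite AX eq_sym.
have gA_gt0 : 0 < gcd_with A by apply: gcd_with_gt0.
rewrite big_nat1_cond_eq dvdn_div ?gcd_with_dvdn // andbT.
by rewrite divn_gt0 // dvdn_leq ?gcd_with_dvdn //= ltnS leq_div.
Qed.

Lemma Phi_divisor_sum n :
  \sum_(1 <= d < n.+2 | d %| n.+1) Phi d = 2 ^ n.+1 - 1.
Proof.
have -> : 2 ^ n.+1 - 1 = #|[set A : {set 'I_n.+1} | (A != set0) && predT #|A|]|.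
  rewrite -{1}[n.+1]card_ord -cardsT -card_powerset powersetT cardsT subn1.
  rewrite -(cardsC1 set0).
  by apply: eq_card => A; rewrite !inE andbT.
rewrite card_nonempty_sets; apply: eq_bigr => d _.
by apply: eq_card => A; rewrite !inE andbT.
Qed.

Lemma Phi_r_divisor_sum r n : 0 < r ->
  \sum_(1 <= d < n.+2 | d %| n.+1) Phi_r r d = 'C(n.+1, r).
Proof.
move=> r_gt0.
have -> : 'C(n.+1, r) = #|[set A : {set 'I_n.+1} | (A != set0) && pred1 r #|A|]|.
  rewrite -{1}[n.+1]card_ord -card_draws; apply: eq_card => A; rewrite !inE /=.
  by case: (A =P set0) => // ->; rewrite cards0 eq_sym eqn0Ngt r_gt0.
by rewrite (card_nonempty_sets (pred1 r)).
Qed.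

Lemma big_dvdn_nat (R : Type) (idx : R) (op : Monoid.law idx) m N (F : nat -> R) :
  0 < m ->
  \big[op/idx]_(1 <= k < N.+1 | m %| k) F k =
  \big[op/idx]_(1 <= j < (N %/ m).+1) F (j * m).
Proof.
move=> m_gt0; elim: N => [|N IH]; first by rewrite div0n !big_geq.
rewrite big_mkcond big_nat_recr //= -big_mkcond IH divnS //.
case: ifP => [m_dvd | _]; last by rewrite Monoid.mulm1.
rewrite add1n [RHS]big_nat_recr //=; congr (op _ (F _)).
by rewrite -(divnK m_dvd) divnS // m_dvd add1n.
Qed.

Local Open Scope ring_scope.

Lemma divisor_sum_swap (R : pzSemiRingType) (F G : nat -> R) n :
  \sum_(1 <= k < n.+1) (\sum_(1 <= d < k.+1 | (d %| k)%N) F d) * G k =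
  \sum_(1 <= m < n.+1) F m * \sum_(1 <= k < n.+1 | (m %| k)%N) G k.
Proof.
transitivity (\sum_(1 <= k < n.+1) \sum_(1 <= d < n.+1 | (d %| k)%N) F d * G k).
  apply: eq_big_nat => k /andP[k_gt0 k_le].
  rewrite (big_nat_widen _ _ _ _ _ k_le) mulr_suml; apply: eq_bigl => d.
  by rewrite ltnS andb_idr // => /dvdn_leq; apply.
rewrite (exchange_big_dep_nat xpredT) //=.
by apply: eq_bigr => m _; rewrite mulr_sumr.
Qed.

Lemma sum_sub_multiples (R : pzSemiRingType) (w : int -> R) n m :
  (forall x : int, x < 0 -> w x = 0) -> (0 < m)%N -> (m <= n)%N ->
  \sum_(j < (n - m)%N.+1) w (n%:Z - m%:Z - (j * m)%:Z) =
  \sum_(1 <= k < n.+1 | (m %| k)%N) w (n%:Z - k%:Z).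
Proof.
move=> w_lt0 m_gt0 le_mn.
have shift : \sum_(j < (n - m)%N.+1) w (n%:Z - m%:Z - (j * m)%:Z) =
             \sum_(1 <= j < (n - m)%N.+2) w (n%:Z - (j * m)%:Z).
  rewrite big_add1 /= big_mkord; apply: eq_bigr => j _.
  by rewrite mulSn PoszD opprD addrA.
have le_div : (n %/ m < (n - m).+2)%N.
  have := leq_divM n m; have : (0 < n %/ m)%N by rewrite divn_gt0.
  nia.
rewrite shift big_dvdn_nat // [LHS](@big_cat_nat _ _ _ (n %/ m).+1) //=.
rewrite [X in _ + X]big1_seq ?addr0 // => j; rewrite mem_index_iota.
case/andP=> _ /andP[lt_nj _]; apply: w_lt0.
by rewrite subr_lt0 ltz_nat -ltn_divLR.
Qed.

Lemma omega_lt0 (x : int) : x < 0 -> omega x = 0.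
Proof. by move=> x_lt0; rewrite /omega (negbTE (ltr0_neq0 x_lt0)) x_lt0. Qed.

Lemma Omega_sub n m : (0 < m)%N -> (m <= n)%N ->
  Omega m (n%:Z - m%:Z) = \sum_(1 <= k < n.+1 | (m %| k)%N) omega (n%:Z - k%:Z).
Proof.
move=> m_gt0 le_mn; rewrite /Omega.
have -> : `|n%:Z - m%:Z|%N = (n - m)%N by rewrite subzn.
by rewrite sum_sub_multiples //; apply: omega_lt0.
Qed.

Lemma Omega_divisor_sum_convolution (F : nat -> nat) n :
  \sum_(1 <= k < n.+1) (\sum_(1 <= d < k.+1 | d %| k) F d)%N%:Z * omega (n%:Z - k%:Z)
  = \sum_(1 <= m < n.+1) (F m)%:Z * Omega m (n%:Z - m%:Z).
Proof.
under eq_bigr do rewrite (big_morph Posz PoszD (erefl 0%:Z)).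
rewrite divisor_sum_swap; apply: eq_big_nat => m /andP[m_gt0 lt_mn].
by rewrite Omega_sub // -ltnS.
Qed.

Theorem mainTheorem13 (n r : nat) (hn : (1 <= n)%N) (hr : (1 <= r)%N) :
  (\sum_(1 <= k < n.+1) ((2 ^ k - 1)%N)%:Z * omega (n%:Z - k%:Z)
     = \sum_(1 <= m < n.+1) (Phi m)%:Z * Omega m (n%:Z - m%:Z))
  /\
  (\sum_(1 <= k < n.+1) ('C(k, r))%:Z * omega (n%:Z - k%:Z)
     = \sum_(1 <= m < n.+1) (Phi_r r m)%:Z * Omega m (n%:Z - m%:Z)).
Proof.
split.
- rewrite -Omega_divisor_sum_convolution; apply: eq_big_nat => -[|k] // _.
  by rewrite Phi_divisor_sum.
- rewrite -Omega_divisor_sum_convolution; apply: eq_big_nat => -[|k] // _.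
  by rewrite Phi_r_divisor_sum.
Qed.
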